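(* Let $(\mathfrak g,[\cdot,\cdot],\alpha,\varepsilon)$ be a color Hom-Lie algebra and $\rho$ a representation of $\mathfrak g$ on $(M,\beta)$. Let $\delta^1:\mathscr C^1(\mathfrak g,M)\to\mathscr C^2(\mathfrak g,M)$ and $\delta^2:\mathscr C^2(\mathfrak g,M)\to\mathscr C^3(\mathfrak g,M)$ be defined, for homogeneous $\varphi$ and homogeneous $x_0,x_1,x_2\in\mathfrak g$, by $\delta^1\varphi(x_0,x_1)=\varepsilon(\varphi,x_0)\rho(x_0)(\varphi(x_1))-\varepsilon(\varphi+x_0,x_1)\rho(x_1)(\varphi(x_0))-\varphi([x_0,x_1])$, $\delta^2\varphi(x_0,x_1,x_2)=\varepsilon(\varphi,x_0)\rho(\alpha(x_0))(\varphi(x_1,x_2))-\varepsilon(\varphi+x_0,x_1)\rho(\alpha(x_1))(\varphi(x_0,x_2))+\varepsilon(\varphi+x_0+x_1,x_2)\rho(\alpha(x_2))(\varphi(x_0,x_1))-\varphi([x_0,x_1],\alpha(x_2))+\varepsilon(x_1,x_2)\varphi([x_0,x_2],\alpha(x_1))+\varphi(\alpha(x_0),[x_1,x_2])$. Then $\delta^2\circ\delta^1=0$.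
   Context: $\mathbb K$ is a field of characteristic zero and $\Gamma$ an abelian group. A bicharacter is a map $\varepsilon:\Gamma\times\Gamma\to\mathbb K\setminus\{0\}$ with $\varepsilon(a,b)\varepsilon(b,a)=1$, $\varepsilon(a,b+c)=\varepsilon(a,b)\varepsilon(a,c)$, $\varepsilon(a+b,c)=\varepsilon(a,c)\varepsilon(b,c)$; for homogeneous objects $\varepsilon(x,y)=\varepsilon(\deg x,\deg y)$. A color Hom-Lie algebra $(\mathfrak g,[\cdot,\cdot],\alpha,\varepsilon)$: $\Gamma$-graded space, even bilinear bracket, even linear $\alpha$, with $[x,y]=-\varepsilon(x,y)[y,x]$ and $\varepsilon(z,x)[\alpha(x),[y,z]]+\varepsilon(x,y)[\alpha(y),[z,x]]+\varepsilon(y,z)[\alpha(z),[x,y]]=0$. A representation of $\mathfrak g$ on $(M,\beta)$ ($M$ $\Gamma$-graded, $\beta:M\to M$ even linear) is an even linear $\rho:\mathfrak g\to\mathfrak{gl}(M)$ with $\rho([x,y])\circ\beta=\rho(\alpha(x))\circ\rho(y)-\varepsilon(x,y)\rho(\alpha(y))\circ\rho(x)$. For $n\ge1$, $\mathscr C^n(\mathfrak g,M)$ is the graded space of $\varepsilon$-alternating multilinear maps $\varphi:\wedge^n\mathfrak g\to M$ (sums of homogeneous ones) satisfying $\varphi\circ\alpha^{\otimes n}=\beta\circ\varphi$. *)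

From HB Require Import structures.
From mathcomp Require Import all_boot all_algebra.
Set Implicit Arguments. Unset Strict Implicit. Unset Printing Implicit Defensive.
Import GRing.Theory.
Local Open Scope ring_scope.

Section ColorHomLie.
Variables (K : fieldType) (G : zmodType).

Definition lin_map (U V : lmodType K) (f : U -> V) : Prop :=
  forall (k : K) (x y : U), f (k *: x + y) = k *: f x + f y.

(* A G-grading of V: V is the direct sum of the images of the
   (linear) projections gproj a, a : G. *)
Record grading (V : lmodType K) := Grading {
  gproj : G -> V -> V;
  gproj_lin : forall a, lin_map (gproj a);
  gproj_gproj : forall a b x,
      gproj a (gproj b x) = if a == b then gproj b x else 0;
  gproj_decomp : forall x, exists s : seq G,
      uniq s /\ x = \sum_(a <- s) gproj a x }.

Definition homog (V : lmodType K) (gr : grading V) (a : G) (x : V) : Prop :=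
  gproj gr a x = x.

Definition even_map (V W : lmodType K) (gV : grading V) (gW : grading W)
  (f : V -> W) : Prop :=
  forall a x, homog gV a x -> homog gW a (f x).

Definition bicharacter (eps : G -> G -> K) : Prop :=
  [/\ (forall a b, eps a b != 0),
      (forall a b, eps a b * eps b a = 1),
      (forall a b c, eps a (b + c) = eps a b * eps a c) &
      (forall a b c, eps (a + b) c = eps a c * eps b c)].

Definition is_colorHomLie (g : lmodType K) (gr : grading g)
  (br : g -> g -> g) (al : g -> g) (eps : G -> G -> K) : Prop :=
  bicharacter eps
  /\ (forall x, lin_map (br x)) /\ (forall y, lin_map (fun x => br x y))
  /\ (forall a b x y, homog gr a x -> homog gr b y -> homog gr (a + b) (br x y))
  /\ lin_map al /\ even_map gr gr al
  /\ (forall a b x y, homog gr a x -> homog gr b y ->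
         br x y = - (eps a b *: br y x))
  /\ (forall a b c x y z, homog gr a x -> homog gr b y -> homog gr c z ->
         eps c a *: br (al x) (br y z) + eps a b *: br (al y) (br z x)
         + eps b c *: br (al z) (br x y) = 0).

Definition is_rep (g : lmodType K) (gr : grading g)
  (br : g -> g -> g) (al : g -> g) (eps : G -> G -> K)
  (M : lmodType K) (grM : grading M) (beta : M -> M) (rho : g -> M -> M) : Prop :=
  [/\ lin_map beta /\ even_map grM grM beta,
      (forall (k : K) x y m, rho (k *: x + y) m = k *: rho x m + rho y m),
      (forall x, lin_map (rho x)),
      (forall a b x m, homog gr a x -> homog grM b m -> homog grM (a + b) (rho x m)) &
      (forall a b x y m, homog gr a x -> homog gr b y ->
         rho (br x y) (beta m) = rho (al x) (rho y m) - eps a b *: rho (al y) (rho x m))].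

Definition is_homog_cochain1 (g : lmodType K) (gr : grading g) (al : g -> g)
  (M : lmodType K) (grM : grading M) (beta : M -> M) (d : G) (phi : g -> M) : Prop :=
  [/\ lin_map phi,
      (forall a x, homog gr a x -> homog grM (d + a) (phi x)) &
      (forall x, phi (al x) = beta (phi x))].

Variables (g : lmodType K) (br : g -> g -> g) (al : g -> g) (eps : G -> G -> K)
  (M : lmodType K) (rho : g -> M -> M).

(* delta^1 phi (x0, x1), for phi homogeneous of degree d and x_i homogeneous
   of degree a_i (degrees passed explicitly). *)
Definition delta1 (phi : g -> M) (d : G) (x0 : g) (a0 : G) (x1 : g) (a1 : G) : M :=
  eps d a0 *: rho x0 (phi x1) - eps (d + a0) a1 *: rho x1 (phi x0) - phi (br x0 x1).

(* delta^2 psi (x0, x1, x2), for psi homogeneous of degree e, given as a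
   degree-annotated function evaluated on homogeneous arguments. *)
Definition delta2 (psi : g -> G -> g -> G -> M) (e : G)
  (x0 : g) (a0 : G) (x1 : g) (a1 : G) (x2 : g) (a2 : G) : M :=
  eps e a0 *: rho (al x0) (psi x1 a1 x2 a2)
  - eps (e + a0) a1 *: rho (al x1) (psi x0 a0 x2 a2)
  + eps (e + a0 + a1) a2 *: rho (al x2) (psi x0 a0 x1 a1)
  - psi (br x0 x1) (a0 + a1) (al x2) a2
  + eps a1 a2 *: psi (br x0 x2) (a0 + a2) (al x1) a1
  + psi (al x0) a0 (br x1 x2) (a1 + a2).

End ColorHomLie.

From mathcomp Require Import all_boot all_algebra.
From mathcomp Require Import ring.
Import GRing.Theory.
Local Open Scope ring_scope.
Set Implicit Arguments. Unset Strict Implicit.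

(* Expanding delta^2 (delta^1 phi) gives three kinds of terms.  Each
   rho([x_i,x_j]) (phi (alpha x_k)) = rho([x_i,x_j]) (beta (phi x_k)) is rewritten
   by the representation identity and cancels the terms
   rho(alpha x_i) (rho x_j (phi x_k)); the terms rho(alpha x_i) (phi [x_j,x_k])
   cancel in pairs; and phi of the three double brackets vanishes by the
   eps-Hom-Jacobi identity.  What remains is a scalar identity between products
   of values of the bicharacter, checked coefficient by coefficient. *)

Section LinMap.
Variables (K : fieldType) (U V : lmodType K) (f : U -> V).
Hypothesis f_lin : lin_map f.

Lemma lin_map0 : f 0 = 0.
Proof.
have := f_lin 1 0 0; rewrite !scale1r addr0 => f0.
by apply: (@addrI _ (f 0)); rewrite addr0 -f0.
Qed.

Lemma lin_mapD x y : f (x + y) = f x + f y.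
Proof. by have := f_lin 1 x y; rewrite !scale1r. Qed.

Lemma lin_mapZ k x : f (k *: x) = k *: f x.
Proof. by rewrite -[k *: x]addr0 f_lin lin_map0 addr0. Qed.

Lemma lin_mapN x : f (- x) = - f x.
Proof. by rewrite -scaleN1r lin_mapZ scaleN1r. Qed.

Lemma lin_mapB x y : f (x - y) = f x - f y.
Proof. by rewrite lin_mapD lin_mapN. Qed.

End LinMap.

Lemma bicharacter_swap (K : fieldType) (G : zmodType) (eps : G -> G -> K) a b :
  bicharacter eps -> eps b a = (eps a b)^-1.
Proof. by case=> nz inv _ _; apply: (mulfI (nz a b)); rewrite inv divff. Qed.

(* Coordinates with respect to a finite family of vectors: an identity in [M]
   between linear combinations of the [vs`_i] is reduced to one scalar identity
   per coefficient. *)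
Section LinearCombination.
Variables (K : fieldType) (M : lmodType K) (vs : seq M).

Definition lincomb (c : nat -> K) : M := \sum_(i < size vs) c i *: vs`_i.

Lemma lincombD c c' : lincomb c + lincomb c' = lincomb (fun i => c i + c' i).
Proof. by rewrite -big_split; apply: eq_bigr => i _; rewrite scalerDl. Qed.

Lemma lincombN c : - lincomb c = lincomb (fun i => - c i).
Proof. by rewrite -sumrN; apply: eq_bigr => i _; rewrite scaleNr. Qed.

Lemma lincombZ k c : k *: lincomb c = lincomb (fun i => k * c i).
Proof. by rewrite scaler_sumr; apply: eq_bigr => i _; rewrite scalerA. Qed.

Lemma lincomb_nth k : (k < size vs)%N -> vs`_k = lincomb (fun i => (i == k)%:R).
Proof.
move=> lt_k; rewrite /lincomb (bigD1 (Ordinal lt_k)) //= eqxx scale1r.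
rewrite big1 ?addr0 // => i ne_ik.
by rewrite (_ : (i == k :> nat) = false) ?scale0r //; apply/negbTE.
Qed.

Lemma lincomb_eq0 c : (forall i, (i < size vs)%N -> c i = 0) -> lincomb c = 0.
Proof. by move=> c0; rewrite /lincomb big1 // => i _; rewrite c0 ?scale0r. Qed.

End LinearCombination.

Section Coboundary.
Variables (K : fieldType) (G : zmodType) (g : lmodType K) (gr : grading G g)
  (br : g -> g -> g) (al : g -> g) (eps : G -> G -> K)
  (M : lmodType K) (grM : grading G M) (beta : M -> M) (rho : g -> M -> M)
  (d : G) (phi : g -> M).
Hypotheses (Hg : is_colorHomLie gr br al eps)
  (Hrho : is_rep gr br al eps grM beta rho)
  (Hphi : is_homog_cochain1 gr al grM beta d phi).

(* The eps-Hom-Jacobi identity, rearranged into the shape of the last three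
   terms of delta^2. *)
Lemma alpha_br_br x y z a b c :
  homog gr a x -> homog gr b y -> homog gr c z ->
  br (al x) (br y z) = br (br x y) (al z) - eps b c *: br (br x z) (al y).
Proof.
move=> Hx Hy Hz.
case: Hg => [bich [br_lin [_ [br_even [_ [al_even [skew jac]]]]]]].
have [nz inv _ eps_addl] := bich.
rewrite (skew _ _ _ _ (br_even _ _ _ _ Hx Hy) (al_even _ _ Hz)).
rewrite (skew _ _ _ _ (br_even _ _ _ _ Hx Hz) (al_even _ _ Hy)) (skew _ _ _ _ Hx Hz).
rewrite (lin_mapN (br_lin _)) (lin_mapZ (br_lin _)) !eps_addl.
have := jac _ _ _ _ _ _ Hx Hy Hz; rewrite -addrA => /eqP; rewrite addr_eq0 => /eqP J.
rewrite -[br (al x) _](scalerK (nz c a)) J (bicharacter_swap _ _ bich).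
rewrite invrK scalerN scalerDr !scalerN !scalerA opprK opprD addrC.
by rewrite [eps b c * _]mulrCA inv mulr1 [eps a b * _]mulrC.
Qed.

Notation dphi := (delta1 br eps rho phi d).

Lemma rho_delta1 v x y a b :
  rho v (dphi x a y b) = eps d a *: rho v (rho x (phi y))
    - eps (d + a) b *: rho v (rho y (phi x)) - rho v (phi (br x y)).
Proof.
case: Hrho => _ _ rho_lin _ _.
by rewrite /delta1 !(lin_mapB (rho_lin v), lin_mapZ (rho_lin v)).
Qed.

Lemma delta1_br_alpha x y z a b c : homog gr a x -> homog gr b y ->
  dphi (br x y) (a + b) (al z) c =
    eps d (a + b) *: (rho (al x) (rho y (phi z)) - eps a b *: rho (al y) (rho x (phi z)))
    - eps (d + (a + b)) c *: rho (al z) (phi (br x y)) - phi (br (br x y) (al z)).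
Proof.
case: Hrho => _ _ _ _ rep; case: Hphi => _ _ phi_al.
by move=> Hx Hy; rewrite /delta1 phi_al (rep _ _ _ _ _ Hx Hy).
Qed.

Lemma delta1_alpha_br x y z a b c : homog gr b y -> homog gr c z ->
  dphi (al x) a (br y z) (b + c) =
    eps d a *: rho (al x) (phi (br y z))
    - eps (d + a) (b + c) *: (rho (al y) (rho z (phi x)) - eps b c *: rho (al z) (rho y (phi x)))
    - phi (br (al x) (br y z)).
Proof.
case: Hrho => _ _ _ _ rep; case: Hphi => _ _ phi_al.
by move=> Hy Hz; rewrite /delta1 phi_al (rep _ _ _ _ _ Hy Hz).
Qed.

End Coboundary.

Theorem mainTheorem9 (K : fieldType) (G : zmodType)
  (charK0 : [pchar K] =i pred0)
  (g : lmodType K) (gr : grading G g) (br : g -> g -> g) (al : g -> g)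
  (eps : G -> G -> K)
  (Hg : is_colorHomLie gr br al eps)
  (M : lmodType K) (grM : grading G M) (beta : M -> M) (rho : g -> M -> M)
  (Hrho : is_rep gr br al eps grM beta rho)
  (d : G) (phi : g -> M)
  (Hphi : is_homog_cochain1 gr al grM beta d phi)
  (x0 x1 x2 : g) (a0 a1 a2 : G)
  (H0 : homog gr a0 x0) (H1 : homog gr a1 x1) (H2 : homog gr a2 x2) :
  delta2 br al eps rho (delta1 br eps rho phi d) d x0 a0 x1 a1 x2 a2 = 0.
Proof.
have [bich _] := Hg; have [phi_lin _ _] := Hphi.
rewrite /delta2 !(rho_delta1 _ _ Hrho) (delta1_br_alpha Hrho Hphi x2 a2 H0 H1).
rewrite (delta1_br_alpha Hrho Hphi x1 a1 H0 H2) (delta1_alpha_br Hrho Hphi x0 a0 H1 H2).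
rewrite (alpha_br_br Hg H0 H1 H2) (lin_mapB phi_lin) (lin_mapZ phi_lin).
pose vs := [:: rho (al x0) (rho x1 (phi x2)); rho (al x0) (rho x2 (phi x1));
  rho (al x1) (rho x0 (phi x2)); rho (al x1) (rho x2 (phi x0));
  rho (al x2) (rho x0 (phi x1)); rho (al x2) (rho x1 (phi x0));
  rho (al x0) (phi (br x1 x2)); rho (al x1) (phi (br x0 x2));
  rho (al x2) (phi (br x0 x1)); phi (br (br x0 x1) (al x2));
  phi (br (br x0 x2) (al x1))].
rewrite -[rho (al x0) (rho x1 _)]/(vs`_0) -[rho (al x0) (rho x2 _)]/(vs`_1).
rewrite -[rho (al x1) (rho x0 _)]/(vs`_2) -[rho (al x1) (rho x2 _)]/(vs`_3).
rewrite -[rho (al x2) (rho x0 _)]/(vs`_4) -[rho (al x2) (rho x1 _)]/(vs`_5).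
rewrite -[rho (al x0) (phi _)]/(vs`_6) -[rho (al x1) (phi _)]/(vs`_7).
rewrite -[rho (al x2) (phi _)]/(vs`_8) -[phi (br _ (al x2))]/(vs`_9).
rewrite -[phi (br _ (al x1))]/(vs`_10).
rewrite !lincomb_nth // !(lincombZ, lincombN, lincombD).
apply: lincomb_eq0 => i lt_i.
have [nz _ eps_addr eps_addl] := bich.
have n12 := nz a1 a2.
have e10 := bicharacter_swap a0 a1 bich; have e20 := bicharacter_swap a0 a2 bich.
have e21 := bicharacter_swap a1 a2 bich.
do 11?[case: i lt_i => [|i] lt_i];
  rewrite //= ?eps_addr ?eps_addl ?e10 ?e20 ?e21; by field.
Qed.
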